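(* ($\Rightarrow_{\mathrm{AP}}$ is a Terminating Over-Approximation.) Let $N$ be a finite set of constrained clauses. (i) There is no infinite sequence $N=N_0\Rightarrow_{\mathrm{AP}}N_1\Rightarrow_{\mathrm{AP}}N_2\Rightarrow_{\mathrm{AP}}\cdots$ (i.e. $\Rightarrow_{\mathrm{AP}}^*$ terminates). (ii) If $N\Rightarrow_{\mathrm{AP}}N'$ and $N'$ is satisfiable, then $N$ is satisfiable.
   Context: Clauses are written $\Gamma\rightarrow\Delta$ with $\Gamma,\Delta$ finite multisets of atoms (negative resp. positive literals); $\dot\cup$ denotes disjoint union. For an atom or term $E$, $E[s]_p$ means $E|_p=s$ and $E[p/s']$ the result of replacing the subterm at position $p$ by $s'$; $E[x]_{p,q}$ means $x$ occurs at positions $p$ and $q$. A term is complex if it is not a variable. A variable and a constant are straight; $f(s_1,\dots,s_n)$ is straight if the $s_i$ are pairwise distinct variables except for at most one straight argument. A constraint $\pi=\bigwedge_i t_i\neq s_i$ is a finite conjunction of disequations ($t_i,s_i$ variable-disjoint, $s_i$ straight); $\pi\sigma=\bigwedge_i t_i\sigma\neq s_i$; a solution is a grounding substitution $\delta$ with no $t_i\delta$ an instance of $s_i$. A constrained clause is $(C;\pi)$; its ground instances are $C\delta$ for solutions $\delta$ of $\pi$ grounding all variables of $C$ and the $t_i$; a Herbrand interpretation $I$ (set of ground atoms) satisfies a ground clause $\Gamma\rightarrow\Delta$ if $\Delta\cap I\neq\emptyset$ or $\Gamma\not\subseteq I$, satisfies $(C;\pi)$ if it satisfies all its ground instances; a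 set is satisfiable if it has such a model. Clauses in a set are assumed pairwise variable-disjoint. Fix a monadic predicate $T$ fresh to $N$ and, for each non-monadic predicate $P$, a function symbol $f_P$ fresh to $N$. $\mathrm{Proj}_P^T$ maps an atom $P(t_1,\dots,t_n)$ to $T(f_P(t_1,\dots,t_n))$ and leaves atoms with other predicates unchanged; it is extended to (constrained) clauses and clause sets. The transformation rules are: Monadic (MO): $N\Rightarrow\mathrm{Proj}_P^T(N)$, provided $P$ is a non-monadic predicate in the signature of $N$. Shallow (SH): $N\,\dot\cup\,\{(\Gamma\rightarrow E[s]_p,\Delta;\pi)\}\Rightarrow N\cup\{(S(x),\Gamma_l\rightarrow E[p/x],\Delta_l;\pi),\ (\Gamma_r\rightarrow S(s),\Delta_r;\pi)\}$, provided $s$ is complex, $|p|=2$, $x$ is a fresh variable and $S$ a fresh monadic predicate, $\Gamma_l\{x\mapsto s\}\cup\Gamma_r=\Gamma$, $\Delta_l\cup\Delta_r=\Delta$, $\{Q(y)\in\Gamma\mid y\in\mathrm{vars}(E[p/x],\Delta_l)\}\subseteq\Gamma_l$ and $\{Q(y)\in\Gamma\mid y\in\mathrm{vars}(s,\Delta_r)\}\subseteq\Gamma_r$. Linear 1 (LI): $N\,\dot\cup\,\{(\Gamma\rightarrow\Delta,E'[x]_p,E[x]_q;\pi)\}\Rightarrow N\cup\{(\Gamma\sigma,\Gamma\rightarrow\Delta,E'[x]_p,E[q/x'];\pi\wedge\pi\sigma)\}$, with $x'$ fresh and $\sigma=\{x\mapsto x'\}$. Linear 2 (LI): $N\,\dot\cup\,\{(\Gamma\rightarrow\Delta,E[x]_{p,q};\pi)\}\Rightarrow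 N\cup\{(\Gamma\sigma,\Gamma\rightarrow\Delta,E[q/x'];\pi\wedge\pi\sigma)\}$, with $x'$ fresh, $p\neq q$, $\sigma=\{x\mapsto x'\}$. Refinement (Ref): $N\,\dot\cup\,\{(C;\pi)\}\Rightarrow N\cup\{(C;\pi\wedge x\neq t),(C;\pi)\{x\mapsto t\}\}$, provided $x\in\mathrm{vars}(C)$, $t$ is straight and $\mathrm{vars}(t)\cap\mathrm{vars}((C;\pi))=\emptyset$. $\Rightarrow_{\mathrm{AP}}$ is the priority rewrite system consisting of these rules with priority Ref $>$ MO $>$ SH $>$ LI (a rule is applied only if no higher-priority rule is applicable), where Ref is applied only finitely many times. *)

From Stdlib Require Import List Arith Permutation.
Import ListNotations.

(* Fixed infinite signature: a function symbol is a pair (name, arity) and the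
   arity of [Fun f ts] is [length ts]; likewise for predicates.  Variables
   are natural numbers. *)
Inductive term : Type :=
| Var (x : nat)
| Fun (f : nat) (ts : list term).

Inductive atom : Type := Atom (P : nat) (ts : list term).

(* A clause  Gamma -> Delta ; multisets are represented by lists
   (order irrelevant, multiplicity relevant). *)
Record clause : Type := Cl { neg : list atom; pos : list atom }.

(* A constraint  /\_i t_i <> s_i  as a list of pairs (t_i, s_i). *)
Definition constr := list (term * term).
Definition cclause := (clause * constr)%type.

Definition cset := cclause -> Prop.

Definition finite_cset (N : cset) : Prop :=
  exists l : list cclause, forall c, N c <-> In c l.

Fixpoint tvars (t : term) : list nat :=
  match t with
  | Var x => [x]
  | Fun _ ts => flat_map tvars ts
  end.

Definition avars (a : atom) : list nat :=
  match a with Atom _ ts => flat_map tvars ts end.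

Definition clvars (C : clause) : list nat :=
  flat_map avars (neg C) ++ flat_map avars (pos C).

Definition ccvars (c : cclause) : list nat :=
  clvars (fst c) ++ flat_map (fun ts => tvars (fst ts) ++ tvars (snd ts)) (snd c).

Fixpoint tfuns (t : term) : list (nat * nat) :=
  match t with
  | Var _ => []
  | Fun f ts => (f, length ts) :: flat_map tfuns ts
  end.

Definition afuns (a : atom) : list (nat * nat) :=
  match a with Atom _ ts => flat_map tfuns ts end.

Definition ccfuns (c : cclause) : list (nat * nat) :=
  flat_map afuns (neg (fst c)) ++ flat_map afuns (pos (fst c))
  ++ flat_map (fun ts => tfuns (fst ts) ++ tfuns (snd ts)) (snd c).

Definition apred (a : atom) : nat * nat :=
  match a with Atom P ts => (P, length ts) end.

Definition ccpreds (c : cclause) : list (nat * nat) :=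
  map apred (neg (fst c)) ++ map apred (pos (fst c)).

Definition pred_occurs (N : cset) (Pn : nat * nat) : Prop :=
  exists c, N c /\ In Pn (ccpreds c).

Definition fun_occurs (N : cset) (fn : nat * nat) : Prop :=
  exists c, N c /\ In fn (ccfuns c).

Definition subst := nat -> term.

Fixpoint tsubst (s : subst) (t : term) : term :=
  match t with
  | Var x => s x
  | Fun f ts => Fun f (map (tsubst s) ts)
  end.

Definition asubst (s : subst) (a : atom) : atom :=
  match a with Atom P ts => Atom P (map (tsubst s) ts) end.

Definition clsubst (s : subst) (C : clause) : clause :=
  Cl (map (asubst s) (neg C)) (map (asubst s) (pos C)).

Definition constr_subst (s : subst) (pi : constr) : constr :=
  map (fun ts => (tsubst s (fst ts), snd ts)) pi.

Definition ccsubst (s : subst) (c : cclause) : cclause :=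
  (clsubst s (fst c), constr_subst s (snd c)).

Definition upd (x : nat) (t : term) : subst :=
  fun y => if Nat.eqb y x then t else Var y.

Definition ground (t : term) : Prop := tvars t = [].

Definition is_var (t : term) : Prop := exists x, t = Var x.

Inductive straight : term -> Prop :=
| straight_var x : straight (Var x)
| straight_fun_vars f xs :
    NoDup xs -> straight (Fun f (map Var xs))
| straight_fun_one f xs1 u xs2 :
    NoDup (xs1 ++ xs2) -> straight u -> ~ is_var u ->
    straight (Fun f (map Var xs1 ++ u :: map Var xs2)).

Definition disjoint (l1 l2 : list nat) : Prop :=
  forall y, In y l1 -> ~ In y l2.

Definition wf_constr (pi : constr) : Prop :=
  forall t s, In (t, s) pi -> disjoint (tvars t) (tvars s) /\ straight s.

Definition is_instance (s u : term) : Prop := exists tau, tsubst tau s = u.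

Definition grounding (d : subst) : Prop := forall y, ground (d y).

Definition solution (d : subst) (pi : constr) : Prop :=
  grounding d /\ forall t s, In (t, s) pi -> ~ is_instance s (tsubst d t).

(* Herbrand interpretation = set of (ground) atoms *)
Definition interp := atom -> Prop.

Definition sat_clause (I : interp) (C : clause) : Prop :=
  (exists a, In a (pos C) /\ I a) \/ ~ (forall a, In a (neg C) -> I a).

Definition models_cc (I : interp) (c : cclause) : Prop :=
  forall d, solution d (snd c) -> sat_clause I (clsubst d (fst c)).

Definition satisfiable (N : cset) : Prop :=
  exists I : interp, forall c, N c -> models_cc I c.

Fixpoint term_at (t : term) (p : list nat) : option term :=
  match p with
  | [] => Some t
  | i :: q =>
      match t with
      | Var _ => None
      | Fun _ ts =>
          match nth_error ts i with
          | Some u => term_at u q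
          | None => None
          end
      end
  end.

Fixpoint map_nth {A} (g : A -> A) (i : nat) (l : list A) : list A :=
  match l, i with
  | [], _ => []
  | a :: l', 0 => g a :: l'
  | a :: l', S j => a :: map_nth g j l'
  end.

Fixpoint term_replace (t : term) (p : list nat) (s : term) : term :=
  match p with
  | [] => s
  | i :: q =>
      match t with
      | Var _ => t
      | Fun f ts => Fun f (map_nth (fun u => term_replace u q s) i ts)
      end
  end.

(* positions in atoms: first index selects the argument *)
Definition atom_at (a : atom) (p : list nat) : option term :=
  match a, p with
  | Atom _ ts, i :: q =>
      match nth_error ts i with Some u => term_at u q | None => None end
  | _, [] => None
  end.

Definition atom_replace (a : atom) (p : list nat) (s : term) : atom :=
  match a, p with
  | Atom P ts, i :: q => Atom P (map_nth (fun u => term_replace u q s) i ts)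
  | _, [] => a
  end.

(* ---------- Multiset union (max of multiplicities) ---------- *)
Definition munion {A} (l r m : list A) : Prop :=
  exists X Y Z, Permutation l (X ++ Y) /\ Permutation r (Y ++ Z) /\
    Permutation m (X ++ Y ++ Z) /\ (forall a, In a X -> ~ In a Z).

Definition replace_cl (N : cset) (c : cclause) (news : list cclause) (N' : cset)
  : Prop := N c /\ forall d, N' d <-> ((N d /\ d <> c) \/ In d news).

Definition proj_atom (T P n fP : nat) (a : atom) : atom :=
  match a with
  | Atom Q ts =>
      if andb (Nat.eqb Q P) (Nat.eqb (length ts) n)
      then Atom T [Fun fP ts] else a
  end.

Definition proj_cc (T P n fP : nat) (c : cclause) : cclause :=
  (Cl (map (proj_atom T P n fP) (neg (fst c)))
      (map (proj_atom T P n fP) (pos (fst c))), snd c).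

(* (MO) ; fP P n is the name of f_P for the predicate (P,n) *)
Definition mo_step (T : nat) (fP : nat -> nat -> nat) (N N' : cset) : Prop :=
  exists P n, n <> 1 /\ pred_occurs N (P, n) /\
    forall d, N' d <-> exists c, N c /\ d = proj_cc T P n (fP P n) c.

Definition sh_step (N N' : cset) : Prop :=
  exists (G Dfull D Gl Gr Dl Dr : list atom) (E : atom) (p : list nat)
         (s : term) (x S : nat) (pi : constr),
    let c := (Cl G Dfull, pi) in
    Permutation Dfull (E :: D) /\
    atom_at E p = Some s /\ length p = 2 /\ ~ is_var s /\
    ~ In x (ccvars c) /\ ~ pred_occurs N (S, 1) /\
    munion (map (asubst (upd x s)) Gl) Gr G /\
    munion Dl Dr D /\
    (forall Q y, In (Atom Q [Var y]) G ->
       In y (avars (atom_replace E p (Var x)) ++ flat_map avars Dl) ->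
       In (Atom Q [Var y]) Gl) /\
    (forall Q y, In (Atom Q [Var y]) G ->
       In y (tvars s ++ flat_map avars Dr) ->
       In (Atom Q [Var y]) Gr) /\
    replace_cl N c
      [ (Cl (Atom S [Var x] :: Gl) (atom_replace E p (Var x) :: Dl), pi);
        (Cl Gr (Atom S [s] :: Dr), pi) ] N'.

Definition li_step (N N' : cset) : Prop :=
  (exists (G Dfull D : list atom) (E' E : atom) (p q : list nat) (x x' : nat)
          (pi : constr),
     let c := (Cl G Dfull, pi) in
     let sg := upd x (Var x') in
     Permutation Dfull (E' :: E :: D) /\
     atom_at E' p = Some (Var x) /\ atom_at E q = Some (Var x) /\
     ~ In x' (ccvars c) /\
     replace_cl N c
       [ (Cl (map (asubst sg) G ++ G) (E' :: atom_replace E q (Var x') :: D),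
          pi ++ constr_subst sg pi) ] N')
  \/
  (exists (G Dfull D : list atom) (E : atom) (p q : list nat) (x x' : nat)
          (pi : constr),
     let c := (Cl G Dfull, pi) in
     let sg := upd x (Var x') in
     Permutation Dfull (E :: D) /\
     atom_at E p = Some (Var x) /\ atom_at E q = Some (Var x) /\ p <> q /\
     ~ In x' (ccvars c) /\
     replace_cl N c
       [ (Cl (map (asubst sg) G ++ G) (atom_replace E q (Var x') :: D),
          pi ++ constr_subst sg pi) ] N').

Definition ref_step (N N' : cset) : Prop :=
  exists (C : clause) (pi : constr) (x : nat) (t : term),
    In x (clvars C) /\ straight t /\ disjoint (tvars t) (ccvars (C, pi)) /\
    replace_cl N (C, pi)
      [ (C, pi ++ [(Var x, t)]); ccsubst (upd x t) (C, pi) ] N'.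

Inductive rule_kind : Type := KRef | KMO | KSH | KLI.

Definition ap_step (T : nat) (fP : nat -> nat -> nat) (k : rule_kind)
  (N N' : cset) : Prop :=
  match k with
  | KRef => ref_step N N'
  | KMO => mo_step T fP N N'
  | KSH => sh_step N N' /\ ~ (exists M, mo_step T fP N M)
  | KLI => li_step N N' /\ ~ (exists M, mo_step T fP N M)
                        /\ ~ (exists M, sh_step N M)
  end.

Definition fresh_params (N : cset) (T : nat) (fP : nat -> nat -> nat) : Prop :=
  ~ pred_occurs N (T, 1) /\
  (forall P n, n <> 1 -> ~ fun_occurs N (fP P n, n)) /\
  (forall P Q n, n <> 1 -> fP P n = fP Q n -> P = Q).

(* Soundness: each rule replaces a clause c by clauses from whose ground
   instances every ground instance cδ can be recovered.  Ref splits the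
   solutions δ according to whether xδ is an instance of t; MO pulls a model
   back along Proj; SH extends δ by x := sδ, so that the right clause yields
   S(sδ) or an atom of Δδ, and in the first case the left clause yields an
   atom of Δδ; LI extends δ by x' := xδ, which turns the new clause back
   into cδ.
   Termination: once Ref has stopped, every MO step removes a non-monadic
   predicate, so eventually all predicates are monadic and only SH and LI
   apply.  Both decrease the sum over the clauses of 3^|Δ| (1 + r(Δ)), where
   |Δ| counts the function symbols of the positive literals and r(Δ) their
   repeated variable occurrences: SH cuts a subterm at depth two out of a
   positive atom, so both new clauses have a smaller |Δ| and no more
   repetitions, while LI keeps |Δ| and removes one repetition. *)

From Pilot Require Import Defs.
From Stdlib Require Import List Arith Permutation Lia Classical Morphisms.
Import ListNotations.

(** * Terms, substitutions and positions *)

Definition term_nested_ind (P : term -> Prop) (Hvar : forall x, P (Var x))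
  (Hfun : forall f ts, Forall P ts -> P (Fun f ts)) : forall t, P t :=
  fix F t := match t with
  | Var x => Hvar x
  | Fun f ts => Hfun f ts ((fix G l := match l return Forall P l with
       | [] => Forall_nil _ | u :: l' => Forall_cons _ (F u) (G l') end) ts)
  end.

Lemma tsubst_ext t s1 s2 :
  (forall y, In y (tvars t) -> s1 y = s2 y) -> tsubst s1 t = tsubst s2 t.
Proof.
  revert s1 s2; induction t as [x|f ts IH] using term_nested_ind; intros s1 s2 Hs;
    simpl in *; auto.
  f_equal. apply map_ext_in. intros u Hu. rewrite Forall_forall in IH.
  apply IH; auto. intros y Hy. apply Hs, in_flat_map; eauto.
Qed.

Lemma tsubst_tsubst t s1 s2 :
  tsubst s2 (tsubst s1 t) = tsubst (fun y => tsubst s2 (s1 y)) t.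
Proof.
  induction t as [x|f ts IH] using term_nested_ind; simpl; auto.
  f_equal. rewrite map_map. apply map_ext_in. intros u Hu.
  rewrite Forall_forall in IH. auto.
Qed.

Lemma in_tvars_tsubst t s z :
  In z (tvars (tsubst s t)) <-> exists y, In y (tvars t) /\ In z (tvars (s y)).
Proof.
  induction t as [x|f ts IH] using term_nested_ind; simpl.
  - split; [eauto|]. intros [y [[<-|[]] Hz]]; auto.
  - rewrite Forall_forall in IH. rewrite in_flat_map. split.
    + intros [u' [Hu Hz]]. apply in_map_iff in Hu as [u [<- Hu]].
      apply IH in Hz as [y [Hy Hz]]; auto. exists y. rewrite in_flat_map. eauto.
    + intros [y [Hy Hz]]. apply in_flat_map in Hy as [u [Hu Hy]].
      exists (tsubst s u). split; [apply in_map; auto|]. apply IH; eauto.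
Qed.

Lemma ground_tsubst d t : grounding d -> ground (tsubst d t).
Proof.
  intros Hd. unfold ground. destruct (tvars (tsubst d t)) as [|z l] eqn:E; auto.
  assert (Hz : In z (tvars (tsubst d t))) by (rewrite E; left; auto).
  apply in_tvars_tsubst in Hz as [y [_ Hz]]. rewrite (Hd y) in Hz. destruct Hz.
Qed.

Lemma ground_of_tsubst tau t y :
  ground (tsubst tau t) -> In y (tvars t) -> ground (tau y).
Proof.
  unfold ground. intros Hg Hy. destruct (tvars (tau y)) as [|z l] eqn:E; auto.
  assert (Hz : In z (tvars (tsubst tau t))).
  { apply in_tvars_tsubst. exists y. rewrite E. auto with datatypes. }
  rewrite Hg in Hz. destruct Hz.
Qed.

Lemma asubst_ext a s1 s2 :
  (forall y, In y (avars a) -> s1 y = s2 y) -> asubst s1 a = asubst s2 a.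
Proof.
  destruct a as [P ts]; simpl. intros Hs. f_equal. apply map_ext_in. intros u Hu.
  apply tsubst_ext. intros y Hy. apply Hs, in_flat_map; eauto.
Qed.

Lemma asubst_asubst a s1 s2 :
  asubst s2 (asubst s1 a) = asubst (fun y => tsubst s2 (s1 y)) a.
Proof.
  destruct a as [P ts]; simpl. f_equal. rewrite map_map. apply map_ext.
  intros; apply tsubst_tsubst.
Qed.

Lemma apred_asubst s a : apred (asubst s a) = apred a.
Proof. destruct a; simpl. now rewrite length_map. Qed.

Lemma clsubst_ext C s1 s2 :
  (forall y, In y (clvars C) -> s1 y = s2 y) -> clsubst s1 C = clsubst s2 C.
Proof.
  intros Hs. unfold clsubst, clvars in *. f_equal; apply map_ext_in; intros a Ha;
    apply asubst_ext; intros y Hy; apply Hs, in_or_app;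
    [left|right]; apply in_flat_map; eauto.
Qed.

Lemma clsubst_clsubst C s1 s2 :
  clsubst s2 (clsubst s1 C) = clsubst (fun y => tsubst s2 (s1 y)) C.
Proof.
  unfold clsubst; simpl. rewrite !map_map. f_equal; apply map_ext; intros;
    apply asubst_asubst.
Qed.

Definition subst_upd (d : subst) (x : nat) (u : term) : subst :=
  fun y => if Nat.eqb y x then u else d y.

Lemma asubst_upd a d x s :
  asubst d (asubst (upd x s) a) = asubst (subst_upd d x (tsubst d s)) a.
Proof.
  rewrite asubst_asubst. apply asubst_ext. intros y _.
  unfold upd, subst_upd. now destruct (Nat.eqb y x).
Qed.

Lemma subst_upd_fresh d x u y : y <> x -> subst_upd d x u y = d y.
Proof. intros Hy. unfold subst_upd. now rewrite (proj2 (Nat.eqb_neq y x) Hy). Qed.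

Lemma tsubst_subst_upd_fresh t d x u :
  ~ In x (tvars t) -> tsubst (subst_upd d x u) t = tsubst d t.
Proof.
  intros Hx. apply tsubst_ext. intros y Hy. apply subst_upd_fresh. congruence.
Qed.

Lemma asubst_subst_upd_fresh a d x u :
  ~ In x (avars a) -> asubst (subst_upd d x u) a = asubst d a.
Proof.
  intros Hx. apply asubst_ext. intros y Hy. apply subst_upd_fresh. congruence.
Qed.

Lemma map_nth_middle {A} (g : A -> A) l1 u l2 :
  Defs.map_nth g (length l1) (l1 ++ u :: l2) = l1 ++ g u :: l2.
Proof. induction l1; simpl; congruence. Qed.

Lemma nth_error_map_nth {A} (g : A -> A) l i j :
  nth_error (Defs.map_nth g j l) i =
  if Nat.eqb i j then option_map g (nth_error l i) else nth_error l i.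
Proof.
  revert i j; induction l as [|a l IHl]; intros [|i] [|j]; simpl; auto.
  all: now destruct (_ =? _).
Qed.

Lemma length_map_nth {A} (g : A -> A) l i : length (Defs.map_nth g i l) = length l.
Proof. revert i; induction l; intros [|i]; simpl; auto. Qed.

Fixpoint tsize (t : term) : nat :=
  match t with Var _ => 0 | Fun _ ts => S (list_sum (map tsize ts)) end.

Definition asize (a : atom) : nat :=
  match a with Atom _ ts => list_sum (map tsize ts) end.

Lemma term_replace_nil u r : term_replace u [] r = r.
Proof. now destruct u. Qed.

Lemma term_at_cons_inv j q u s :
  term_at u (j :: q) = Some s ->
  exists f l1 u' l2, u = Fun f (l1 ++ u' :: l2) /\ length l1 = j /\ term_at u' q = Some s.
Proof.
  simpl. destruct u as [x|f us]; try discriminate.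
  destruct (nth_error us j) as [u'|] eqn:E; try discriminate. intros H.
  destruct (nth_error_split us j E) as [l1 [l2 [-> <-]]]. exists f, l1, u', l2. auto.
Qed.

Lemma term_at_tvars q u s :
  term_at u q = Some s ->
  exists A B, tvars u = A ++ tvars s ++ B /\
    forall r, tvars (term_replace u q r) = A ++ tvars r ++ B.
Proof.
  revert u; induction q as [|j q IH]; intros u H.
  - injection H as <-. exists [], []. rewrite app_nil_r.
    split; auto. intros r. rewrite term_replace_nil. now rewrite app_nil_r.
  - destruct (term_at_cons_inv _ _ _ _ H) as [f [l1 [u' [l2 [-> [<- H']]]]]].
    destruct (IH _ H') as [A [B [H1 H2]]].
    exists (flat_map tvars l1 ++ A), (B ++ flat_map tvars l2). simpl. split.
    + rewrite flat_map_app. simpl. rewrite H1. now rewrite !app_assoc.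
    + intros r. rewrite map_nth_middle, flat_map_app. simpl. rewrite H2.
      now rewrite !app_assoc.
Qed.

Lemma term_at_tsize q u s r :
  term_at u q = Some s -> tsize u + tsize r = tsize (term_replace u q r) + tsize s.
Proof.
  revert u; induction q as [|j q IH]; intros u H.
  - injection H as <-. rewrite term_replace_nil. lia.
  - destruct (term_at_cons_inv _ _ _ _ H) as [f [l1 [u' [l2 [-> [<- H']]]]]].
    simpl. rewrite map_nth_middle, !map_app, !list_sum_app. simpl.
    specialize (IH _ H'). lia.
Qed.

Lemma tsubst_term_replace q u s r sg :
  term_at u q = Some s -> tsubst sg r = tsubst sg s ->
  tsubst sg (term_replace u q r) = tsubst sg u.
Proof.
  revert u; induction q as [|j q IH]; intros u H Hr.
  - injection H as <-. now rewrite term_replace_nil.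
  - destruct (term_at_cons_inv _ _ _ _ H) as [f [l1 [u' [l2 [-> [<- H']]]]]].
    simpl. rewrite map_nth_middle, !map_app. simpl. now rewrite (IH _ H' Hr).
Qed.

Lemma term_at_replace_other p q u x y r :
  term_at u p = Some (Var x) -> term_at u q = Some (Var y) -> p <> q ->
  term_at (term_replace u q r) p = Some (Var x).
Proof.
  revert u q; induction p as [|i p IH]; intros u [|j q] Hp Hq Hpq.
  - congruence.
  - simpl in Hp. injection Hp as ->. discriminate.
  - simpl in Hq. injection Hq as ->. discriminate.
  - destruct u as [z|f us]; try discriminate. simpl in *.
    rewrite nth_error_map_nth. destruct (Nat.eqb_spec i j) as [<-|]; auto.
    destruct (nth_error us i); try discriminate. simpl.
    apply (IH _ q Hp Hq). congruence.
Qed.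

Lemma atom_at_inv E p s :
  atom_at E p = Some s ->
  exists P l1 u l2 q, E = Atom P (l1 ++ u :: l2) /\ p = length l1 :: q /\
    term_at u q = Some s /\
    forall r, atom_replace E p r = Atom P (l1 ++ term_replace u q r :: l2).
Proof.
  destruct E as [P ts], p as [|i q]; simpl; try discriminate.
  destruct (nth_error ts i) as [u|] eqn:E; try discriminate. intros H.
  destruct (nth_error_split ts i E) as [l1 [l2 [-> <-]]].
  exists P, l1, u, l2, q. repeat split; auto.
  intros r. simpl. now rewrite map_nth_middle.
Qed.

Lemma atom_at_avars E p s :
  atom_at E p = Some s ->
  exists A B, avars E = A ++ tvars s ++ B /\
    forall r, avars (atom_replace E p r) = A ++ tvars r ++ B.
Proof.
  intros H. destruct (atom_at_inv _ _ _ H) as [P [l1 [u [l2 [q [-> [-> [H1 H2]]]]]]]].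
  destruct (term_at_tvars _ _ _ H1) as [A [B [H3 H4]]].
  exists (flat_map tvars l1 ++ A), (B ++ flat_map tvars l2). split.
  - simpl. rewrite flat_map_app. simpl. rewrite H3. now rewrite !app_assoc.
  - intros r. rewrite H2. simpl. rewrite flat_map_app. simpl. rewrite H4.
    now rewrite !app_assoc.
Qed.

Lemma in_avars_atom_at E p s y :
  atom_at E p = Some s -> In y (tvars s) -> In y (avars E).
Proof.
  intros H Hy. destruct (atom_at_avars _ _ _ H) as [A [B [-> _]]].
  rewrite !in_app_iff. auto.
Qed.

Lemma atom_at_asize E p s r :
  atom_at E p = Some s -> asize E + tsize r = asize (atom_replace E p r) + tsize s.
Proof.
  intros H. destruct (atom_at_inv _ _ _ H) as [P [l1 [u [l2 [q [-> [-> [H1 H2]]]]]]]].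
  rewrite H2. simpl. rewrite !map_app, !list_sum_app. simpl.
  pose proof (term_at_tsize _ _ _ r H1). lia.
Qed.

Lemma atom_at_depth2_tsize E p s :
  atom_at E p = Some s -> length p = 2 -> tsize s < asize E.
Proof.
  intros H Hl. destruct (atom_at_inv _ _ _ H) as [P [l1 [u [l2 [q [-> [-> [H1 _]]]]]]]].
  destruct q as [|j [|k q]]; simpl in Hl; try lia.
  destruct (term_at_cons_inv _ _ _ _ H1) as [f [m1 [u' [m2 [-> [_ H3]]]]]].
  injection H3 as ->. simpl. rewrite !map_app, !list_sum_app. simpl.
  rewrite !map_app, !list_sum_app. simpl. lia.
Qed.

Lemma asubst_atom_replace E p s r sg :
  atom_at E p = Some s -> tsubst sg r = tsubst sg s ->
  asubst sg (atom_replace E p r) = asubst sg E.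
Proof.
  intros H Hr. destruct (atom_at_inv _ _ _ H) as [P [l1 [u [l2 [q [-> [-> [H1 H2]]]]]]]].
  rewrite H2. simpl. rewrite !map_app. simpl.
  now rewrite (tsubst_term_replace _ _ _ _ _ H1 Hr).
Qed.

Lemma atom_at_replace_other E p q x y r :
  atom_at E p = Some (Var x) -> atom_at E q = Some (Var y) -> p <> q ->
  atom_at (atom_replace E q r) p = Some (Var x).
Proof.
  destruct E as [P ts], p as [|i p], q as [|j q]; simpl; try discriminate.
  intros Hp Hq Hpq. rewrite nth_error_map_nth. destruct (Nat.eqb_spec i j) as [<-|]; auto.
  destruct (nth_error ts i); try discriminate. simpl.
  apply (term_at_replace_other _ _ _ _ _ _ Hp Hq). congruence.
Qed.

Lemma apred_atom_replace E p r : apred (atom_replace E p r) = apred E.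
Proof. destruct E, p; simpl; auto. now rewrite length_map_nth. Qed.

Lemma asubst_atom_replace_var E p s x d :
  atom_at E p = Some s -> ~ In x (avars E) ->
  asubst (subst_upd d x (tsubst d s)) (atom_replace E p (Var x)) = asubst d E.
Proof.
  intros H Hx. rewrite (asubst_atom_replace _ _ _ _ _ H).
  - now apply asubst_subst_upd_fresh.
  - simpl. unfold subst_upd. rewrite Nat.eqb_refl. symmetry.
    apply tsubst_subst_upd_fresh. intros Hs. eapply Hx, in_avars_atom_at; eauto.
Qed.

(** * Soundness *)

Definition lvars (D : list atom) : list nat := flat_map avars D.

Lemma in_lvars a D y : In a D -> In y (avars a) -> In y (lvars D).
Proof. intros. apply in_flat_map. eauto. Qed.

Lemma in_ccvars_neg C pi a y : In a (neg C) -> In y (avars a) -> In y (ccvars (C, pi)).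
Proof. intros. apply in_or_app. left. apply in_or_app. left. eapply in_lvars; eauto. Qed.

Lemma in_ccvars_pos C pi a y : In a (pos C) -> In y (avars a) -> In y (ccvars (C, pi)).
Proof. intros. apply in_or_app. left. apply in_or_app. right. eapply in_lvars; eauto. Qed.

Lemma in_ccvars_constr C pi t s y :
  In (t, s) pi -> In y (tvars t) -> In y (ccvars (C, pi)).
Proof.
  intros. apply in_or_app. right. apply in_flat_map. exists (t, s).
  split; auto. apply in_or_app; auto.
Qed.

Lemma solution_app d pi1 pi2 :
  solution d (pi1 ++ pi2) <-> solution d pi1 /\ solution d pi2.
Proof.
  unfold solution. setoid_rewrite in_app_iff. firstorder.
Qed.

Lemma solution_ext d d' pi :
  grounding d' -> (forall t s y, In (t, s) pi -> In y (tvars t) -> d' y = d y) ->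
  solution d pi -> solution d' pi.
Proof.
  intros Hg Hag [_ Hs]. split; auto. intros t s Hin.
  rewrite (tsubst_ext t d' d); eauto.
Qed.

Lemma solution_constr_subst d sg pi :
  grounding d -> solution (fun y => tsubst d (sg y)) pi ->
  solution d (constr_subst sg pi).
Proof.
  intros Hg [_ Hs]. split; auto. intros t s Hin.
  apply in_map_iff in Hin as [[t0 s0] [Heq Hin]]. injection Heq as <- <-.
  rewrite tsubst_tsubst. exact (Hs _ _ Hin).
Qed.

Lemma solution_subst_upd_fresh C pi d x u :
  ~ In x (ccvars (C, pi)) -> ground u -> solution d pi ->
  solution (subst_upd d x u) pi.
Proof.
  intros Hx Hu Hd. apply (solution_ext d); auto.
  - intros y. unfold subst_upd. destruct (Nat.eqb y x); auto. apply Hd.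
  - intros t s y Hin Hy. apply subst_upd_fresh.
    intros ->. eapply Hx, in_ccvars_constr; eauto.
Qed.

Lemma sat_clause_incl I C C' :
  incl (pos C') (pos C) -> incl (neg C') (neg C) ->
  sat_clause I C' -> sat_clause I C.
Proof. unfold sat_clause. firstorder. Qed.

Lemma sat_clause_map I f C :
  sat_clause I (Cl (map f (neg C)) (map f (pos C))) -> sat_clause (fun a => I (f a)) C.
Proof.
  unfold sat_clause; simpl. intros [[b [Hb Ib]]|Hn].
  - apply in_map_iff in Hb as [a [<- Ha]]. eauto.
  - right. intros Hall. apply Hn. intros b Hb.
    apply in_map_iff in Hb as [a [<- Ha]]. auto.
Qed.

Lemma replace_cl_sound N c news N' :
  replace_cl N c news N' ->
  (forall I, (forall d, In d news -> models_cc I d) -> models_cc I c) ->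
  satisfiable N' -> satisfiable N.
Proof.
  intros [Hc HN'] Hs [I HI]. exists I. intros c0 Hc0.
  destruct (classic (c0 = c)) as [->|Hne].
  - apply Hs. intros d Hd. apply HI, HN'. auto.
  - apply HI, HN'. auto.
Qed.

(* If xδ = tτ, then δ factors through {x ↦ t} as τ on the variables of t
   and δ elsewhere, since these are disjoint from those of the clause. *)
Lemma ref_instance_sat I C pi x t d tau :
  disjoint (tvars t) (ccvars (C, pi)) -> tsubst tau t = d x -> solution d pi ->
  models_cc I (ccsubst (upd x t) (C, pi)) -> sat_clause I (clsubst d C).
Proof.
  intros Hdis Htau Hd HI.
  set (d' := fun y => if in_dec Nat.eq_dec y (tvars t) then tau y else d y).
  assert (Hag : forall y, In y (ccvars (C, pi)) -> tsubst d' (upd x t y) = d y).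
  { intros y Hy. unfold upd. destruct (Nat.eqb_spec y x) as [->|Hne].
    - rewrite <- Htau. apply tsubst_ext. intros z Hz. unfold d'.
      now destruct (in_dec Nat.eq_dec z (tvars t)).
    - simpl. unfold d'. destruct (in_dec Nat.eq_dec y (tvars t)) as [Ht|]; auto.
      now destruct (Hdis y Ht). }
  assert (Hg : grounding d').
  { intros y. unfold d'. destruct (in_dec Nat.eq_dec y (tvars t)) as [Hy|]; [|apply Hd].
    apply (ground_of_tsubst _ t); auto. rewrite Htau. apply Hd. }
  assert (Hd' : solution d' (constr_subst (upd x t) pi)).
  { apply solution_constr_subst; auto. apply (solution_ext d); auto.
    - intros y. apply ground_tsubst, Hg.
    - intros t0 s0 y Hin Hy. apply Hag. eapply in_ccvars_constr; eauto. }
  specialize (HI d' Hd'). simpl in HI. rewrite clsubst_clsubst in HI.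
  rewrite (clsubst_ext C _ d) in HI; auto.
  intros y Hy. apply Hag, in_or_app. auto.
Qed.

Lemma ref_step_sound N N' : ref_step N N' -> satisfiable N' -> satisfiable N.
Proof.
  intros [C [pi [x [t [_ [_ [Hdis Hrep]]]]]]].
  apply (replace_cl_sound _ _ _ _ Hrep). intros I HI d Hd.
  destruct (classic (is_instance t (d x))) as [[tau Htau]|Hni].
  - eapply ref_instance_sat; eauto. apply HI. simpl. auto.
  - apply (HI _ (or_introl eq_refl)), solution_app. split; auto.
    split; [apply Hd|]. intros t0 s0 [Heq|[]]. now injection Heq as <- <-.
Qed.

Lemma asubst_proj_atom T P n f d a :
  asubst d (proj_atom T P n f a) = proj_atom T P n f (asubst d a).
Proof.
  destruct a as [Q ts]. simpl. rewrite length_map.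
  now destruct (andb (Nat.eqb Q P) (Nat.eqb (length ts) n)).
Qed.

Lemma mo_step_sound T fP N N' : mo_step T fP N N' -> satisfiable N' -> satisfiable N.
Proof.
  intros [P [n [_ [_ HN']]]] [I HI].
  exists (fun a => I (proj_atom T P n (fP P n) a)). intros c Hc d Hd.
  apply sat_clause_map.
  assert (Hproj := HI _ (proj2 (HN' _) (ex_intro _ c (conj Hc eq_refl))) d Hd).
  unfold clsubst, proj_cc in *; simpl in *. rewrite !map_map in *.
  erewrite !(map_ext _ _ (asubst_proj_atom T P n (fP P n) d)) in Hproj. exact Hproj.
Qed.

Definition submultiset {A} (l m : list A) : Prop := exists K, Permutation m (l ++ K).

Lemma munion_submultiset {A} (l r m : list A) :
  munion l r m -> submultiset l m /\ submultiset r m.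
Proof.
  intros [X [Y [Z [H1 [H2 [H3 _]]]]]]. split.
  - exists Z. now rewrite H3, H1, app_assoc.
  - exists X. rewrite H3, H2. apply Permutation_app_comm.
Qed.

Lemma submultiset_incl {A} (l m : list A) : submultiset l m -> incl l m.
Proof.
  intros [K HK] a Ha. apply (Permutation_in _ (Permutation_sym HK)), in_or_app. auto.
Qed.

Lemma sh_left_instance I G Dfull Gl Dl E p s x S pi d :
  In E Dfull -> incl Dl Dfull -> atom_at E p = Some s ->
  ~ In x (ccvars (Cl G Dfull, pi)) -> incl (map (asubst (upd x s)) Gl) G ->
  models_cc I (Cl (Atom S [Var x] :: Gl) (atom_replace E p (Var x) :: Dl), pi) ->
  solution d pi -> I (Atom S [tsubst d s]) -> (forall g, In g G -> I (asubst d g)) ->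
  exists a, In a Dfull /\ I (asubst d a).
Proof.
  intros HE HDl Hp Hx HGl HI Hd IS IG.
  set (d' := subst_upd d x (tsubst d s)).
  assert (Hd' : solution d' pi)
    by (apply (solution_subst_upd_fresh (Cl G Dfull)); auto; apply ground_tsubst, Hd).
  destruct (HI d' Hd') as [[b [[<-|Hb] Ib]]|Hn]; simpl in *.
  - exists E. split; auto. unfold d' in Ib. rewrite asubst_atom_replace_var in Ib; auto.
    intros Hxe. now apply Hx, (in_ccvars_pos _ _ E).
  - apply in_map_iff in Hb as [a [<- Ha]]. exists a. split; auto.
    unfold d' in Ib. rewrite asubst_subst_upd_fresh in Ib; auto.
    intros Hxa. apply Hx, (in_ccvars_pos _ _ a); auto.
  - exfalso. apply Hn. intros b [<-|Hb].
    + simpl. unfold d', subst_upd. now rewrite Nat.eqb_refl.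
    + apply in_map_iff in Hb as [g [<- Hg]]. unfold d'. rewrite <- asubst_upd.
      apply IG, HGl, in_map, Hg.
Qed.

Lemma sh_models I G Dfull Gl Gr Dl Dr E p s x S pi :
  In E Dfull -> incl Dl Dfull -> incl Dr Dfull -> atom_at E p = Some s ->
  ~ In x (ccvars (Cl G Dfull, pi)) -> incl (map (asubst (upd x s)) Gl) G -> incl Gr G ->
  models_cc I (Cl (Atom S [Var x] :: Gl) (atom_replace E p (Var x) :: Dl), pi) ->
  models_cc I (Cl Gr (Atom S [s] :: Dr), pi) ->
  models_cc I (Cl G Dfull, pi).
Proof.
  intros HE HDl HDr Hp Hx HGl HGr H1 H2 d Hd. unfold sat_clause; simpl.
  destruct (classic (forall a, In a (map (asubst d) G) -> I a)) as [HG|]; [left|now right].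
  assert (IG : forall g, In g G -> I (asubst d g)) by (intros; apply HG, in_map; auto).
  destruct (H2 d Hd) as [[b [[<-|Hb] Ib]]|Hn]; simpl in *.
  - destruct (sh_left_instance I G Dfull Gl Dl E p s x S pi d) as [a [Ha Ia]]; auto.
    exists (asubst d a). split; auto. now apply in_map.
  - apply in_map_iff in Hb as [a [<- Ha]]. exists (asubst d a).
    split; auto. now apply in_map, HDr.
  - exfalso. apply Hn. intros b Hb. apply in_map_iff in Hb as [g [<- Hg]]. auto.
Qed.

Lemma sh_step_sound N N' : sh_step N N' -> satisfiable N' -> satisfiable N.
Proof.
  intros [G [Dfull [D [Gl [Gr [Dl [Dr [E [p [s [x [S [pi H]]]]]]]]]]]]].
  destruct H as [HD [Hp [_ [_ [Hx [_ [HmG [HmD [_ [_ Hrep]]]]]]]]]].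
  destruct (munion_submultiset _ _ _ HmG) as [HGl%submultiset_incl HGr%submultiset_incl].
  destruct (munion_submultiset _ _ _ HmD) as [HDl%submultiset_incl HDr%submultiset_incl].
  assert (HDfull : incl (E :: D) Dfull)
    by (intros a Ha; now apply (Permutation_in _ (Permutation_sym HD))).
  apply (replace_cl_sound _ _ _ _ Hrep). intros I HI.
  apply (sh_models I G Dfull Gl Gr Dl Dr E p s x S pi); auto with datatypes;
    try (intros a Ha; apply HDfull; auto with datatypes); apply HI; simpl; auto.
Qed.

(* Both variants of LI: the occurrence of x at q in E is renamed to x', and x
   still occurs in the new positive literals (in E' for Linear 1, which is then
   part of K). *)
Definition linearization (N N' : cset) : Prop :=
  exists (G Dfull K P' : list atom) (E : atom) (q : list nat) (x x' : nat) (pi : constr),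
    Permutation Dfull (E :: K) /\ Permutation P' (atom_replace E q (Var x') :: K) /\
    atom_at E q = Some (Var x) /\ In x (lvars P') /\
    ~ In x' (ccvars (Cl G Dfull, pi)) /\
    replace_cl N (Cl G Dfull, pi)
      [(Cl (map (asubst (upd x (Var x'))) G ++ G) P',
        pi ++ constr_subst (upd x (Var x')) pi)] N'.

Lemma li_step_linearization N N' : li_step N N' -> linearization N N'.
Proof.
  intros [H|H].
  - destruct H as [G [Dfull [D [E' [E [p [q [x [x' [pi H]]]]]]]]]].
    destruct H as [HD [Hp [Hq [Hx' Hrep]]]].
    exists G, Dfull, (E' :: D), (E' :: atom_replace E q (Var x') :: D), E, q, x, x', pi.
    repeat split; try apply Hrep; auto.
    + rewrite HD. apply perm_swap.
    + apply perm_swap.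
    + eapply in_lvars; [now left|]. eapply in_avars_atom_at; eauto. now left.
  - destruct H as [G [Dfull [D [E [p [q [x [x' [pi H]]]]]]]]].
    destruct H as [HD [Hp [Hq [Hpq [Hx' Hrep]]]]].
    exists G, Dfull, D, (atom_replace E q (Var x') :: D), E, q, x, x', pi.
    repeat split; try apply Hrep; auto.
    + eapply in_lvars; [now left|]. apply (in_avars_atom_at _ p (Var x)).
      * eapply atom_at_replace_other; eauto.
      * now left.
Qed.

Lemma tsubst_upd_rename d x x' y :
  y <> x' -> tsubst (subst_upd d x' (d x)) (upd x (Var x') y) = d y.
Proof.
  intros Hy. unfold upd. destruct (Nat.eqb_spec y x) as [->|]; simpl.
  - unfold subst_upd. now rewrite Nat.eqb_refl.
  - now apply subst_upd_fresh.
Qed.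

Lemma solution_rename_copy C pi d x x' :
  ~ In x' (ccvars (C, pi)) -> solution d pi ->
  solution (subst_upd d x' (d x)) (pi ++ constr_subst (upd x (Var x')) pi).
Proof.
  intros Hx' Hd.
  assert (Hpi : solution (subst_upd d x' (d x)) pi).
  { apply (solution_subst_upd_fresh C); auto. apply Hd. }
  apply solution_app. split; auto. apply solution_constr_subst; [apply Hpi|].
  apply (solution_ext d); auto.
  - intros y. apply ground_tsubst, Hpi.
  - intros t s y Hin Hy. apply tsubst_upd_rename.
    intros ->. eapply Hx', in_ccvars_constr; eauto.
Qed.

Lemma linearization_models I G Dfull K P' E q x x' pi :
  incl (E :: K) Dfull -> incl P' (atom_replace E q (Var x') :: K) ->
  atom_at E q = Some (Var x) -> ~ In x' (ccvars (Cl G Dfull, pi)) ->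
  models_cc I (Cl (map (asubst (upd x (Var x'))) G ++ G) P',
               pi ++ constr_subst (upd x (Var x')) pi) ->
  models_cc I (Cl G Dfull, pi).
Proof.
  intros HD HP Hq Hx' HI d Hd.
  pose proof (HI _ (solution_rename_copy _ _ _ x _ Hx' Hd)) as Hsat.
  eapply sat_clause_incl; [| |exact Hsat]; simpl; intros b Hb;
    apply in_map_iff in Hb as [a [<- Ha]].
  - destruct (HP a Ha) as [<-|HaK].
    + change (d x) with (tsubst d (Var x)).
      rewrite asubst_atom_replace_var; auto using in_map with datatypes.
      intros Hx'E. apply Hx', (in_ccvars_pos _ _ E); auto with datatypes.
    + rewrite asubst_subst_upd_fresh; auto using in_map with datatypes.
      intros Hx'a. apply Hx', (in_ccvars_pos _ _ a); auto with datatypes.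
  - apply in_app_or in Ha as [Ha|Hg].
    + apply in_map_iff in Ha as [g [<- Hg]]. rewrite asubst_asubst.
      rewrite (asubst_ext g _ d); [now apply in_map|].
      intros y Hy. apply tsubst_upd_rename.
      intros ->. apply Hx', (in_ccvars_neg _ _ g); auto.
    + rewrite asubst_subst_upd_fresh; [now apply in_map|].
      intros Hx'a. apply Hx', (in_ccvars_neg _ _ a); auto.
Qed.

Lemma li_step_sound N N' : li_step N N' -> satisfiable N' -> satisfiable N.
Proof.
  intros H. apply li_step_linearization in H
    as [G [Dfull [K [P' [E [q [x [x' [pi [HD [HP [Hq [_ [Hx' Hrep]]]]]]]]]]]]]].
  apply (replace_cl_sound _ _ _ _ Hrep). intros I HI.
  apply (linearization_models I G Dfull K P' E q x x' pi); auto.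
  - intros a Ha. now apply (Permutation_in _ (Permutation_sym HD)).
  - intros a Ha. now apply (Permutation_in _ HP).
  - apply HI. now left.
Qed.

Lemma ap_step_sound T fP k N N' :
  ap_step T fP k N N' -> satisfiable N' -> satisfiable N.
Proof.
  destruct k; simpl.
  - apply ref_step_sound.
  - apply mo_step_sound.
  - intros [H _]. now apply sh_step_sound.
  - intros [H _]. now apply li_step_sound.
Qed.

(** * Termination *)

Fixpoint dups (l : list nat) : nat :=
  match l with
  | [] => 0
  | a :: l' => (if in_dec Nat.eq_dec a l' then 1 else 0) + dups l'
  end.

Lemma dups_cons_fresh x l : ~ In x l -> dups (x :: l) = dups l.
Proof. intros. simpl. now destruct (in_dec Nat.eq_dec x l). Qed.

Lemma dups_cons_in x l : In x l -> dups (x :: l) = S (dups l).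
Proof. intros. simpl. now destruct (in_dec Nat.eq_dec x l). Qed.

#[local] Instance dups_Permutation : Proper (@Permutation nat ==> eq) dups.
Proof.
  intros l m H. induction H as [|x l l' H IH|x y l|l l' l'' _ IH1 _ IH2]; auto.
  - destruct (in_dec Nat.eq_dec x l) as [Hx|Hx].
    + rewrite !dups_cons_in, IH; auto. now apply (Permutation_in _ H).
    + rewrite !dups_cons_fresh, IH; auto.
      intros Hx'. now apply Hx, (Permutation_in _ (Permutation_sym H)).
  - destruct (Nat.eq_dec x y) as [<-|Hxy]; [reflexivity|].
    destruct (in_dec Nat.eq_dec x l), (in_dec Nat.eq_dec y l);
      repeat first [ rewrite dups_cons_in by (simpl; auto)
                   | rewrite dups_cons_fresh by (simpl; intuition congruence) ];
      reflexivity.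
  - congruence.
Qed.

Lemma dups_app_le l k : dups l <= dups (l ++ k).
Proof.
  induction l as [|a l IH]; simpl; [lia|].
  destruct (in_dec Nat.eq_dec a l), (in_dec Nat.eq_dec a (l ++ k)); try lia.
  exfalso. auto with datatypes.
Qed.

#[local] Instance lvars_Permutation :
  Proper (@Permutation atom ==> @Permutation nat) lvars.
Proof. apply Permutation_flat_map. Qed.

Lemma lvars_app D D' : lvars (D ++ D') = lvars D ++ lvars D'.
Proof. apply flat_map_app. Qed.

Definition psize (D : list atom) : nat := list_sum (map asize D).

#[local] Instance psize_Permutation : Proper (@Permutation atom ==> eq) psize.
Proof. intros D D' H. unfold psize. now rewrite H. Qed.

Lemma psize_cons a D : psize (a :: D) = asize a + psize D.
Proof. reflexivity. Qed.

Lemma psize_app D D' : psize (D ++ D') = psize D + psize D'.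
Proof. unfold psize. now rewrite map_app, list_sum_app. Qed.

(* Base 3 because SH replaces a clause of positive size c by two clauses of
   positive size at most c - 1, and 2 * 3^(c-1) < 3^c. *)
Definition cweight (c : cclause) : nat :=
  3 ^ psize (pos (fst c)) * S (dups (lvars (pos (fst c)))).

Ltac perm_by_count :=
  apply (Permutation_count_occ Nat.eq_dec); intro;
  repeat rewrite count_occ_app; simpl; repeat rewrite count_occ_app;
  repeat destruct Nat.eq_dec; lia.

Lemma pow3_sum_lt a b c m n k :
  a < c -> b < c -> m <= k -> n <= k -> 3 ^ a * S m + 3 ^ b * S n < 3 ^ c * S k.
Proof.
  intros Ha Hb Hm Hn. destruct c as [|c]; [lia|].
  assert (3 ^ a <= 3 ^ c) by (apply Nat.pow_le_mono_r; lia).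
  assert (3 ^ b <= 3 ^ c) by (apply Nat.pow_le_mono_r; lia).
  assert (0 < 3 ^ c) by (apply Nat.neq_0_lt_0, Nat.pow_nonzero; lia).
  rewrite Nat.pow_succ_r'. nia.
Qed.

Lemma sh_cweight_lt G Dfull D Gl Gr Dl Dr E p s x S pi :
  Permutation Dfull (E :: D) -> atom_at E p = Some s -> length p = 2 -> ~ is_var s ->
  ~ In x (lvars Dfull) -> submultiset Dl D -> submultiset Dr D ->
  cweight (Cl (Atom S [Var x] :: Gl) (atom_replace E p (Var x) :: Dl), pi) +
  cweight (Cl Gr (Atom S [s] :: Dr), pi) < cweight (Cl G Dfull, pi).
Proof.
  intros HD Hp Hl Hs Hx [K1 HK1] [K2 HK2]. unfold cweight; cbn [fst pos].
  destruct (atom_at_avars _ _ _ Hp) as [A [B [HvE HvE']]].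
  pose proof (atom_at_asize E p s (Var x) Hp) as Hsize; simpl tsize in Hsize.
  pose proof (atom_at_depth2_tsize E p s Hp Hl).
  assert (1 <= tsize s) by (destruct s; [destruct Hs; eexists; eauto|simpl; lia]).
  assert (Hlv1 : Permutation (lvars Dfull) ((A ++ B ++ lvars Dl) ++ tvars s ++ lvars K1)).
  { rewrite HD. simpl. rewrite HvE, HK1, lvars_app. perm_by_count. }
  assert (Hlv2 : Permutation (lvars Dfull) ((tvars s ++ lvars Dr) ++ A ++ B ++ lvars K2)).
  { rewrite HD. simpl. rewrite HvE, HK2, lvars_app. perm_by_count. }
  assert (Hdups1 :
    dups (avars (atom_replace E p (Var x)) ++ lvars Dl) <= dups (lvars Dfull)).
  { rewrite HvE'.
    replace (dups _) with (dups (x :: A ++ B ++ lvars Dl))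
      by (apply dups_Permutation; perm_by_count).
    rewrite dups_cons_fresh, Hlv1; [apply dups_app_le|].
    intros Hin. apply Hx. rewrite Hlv1. auto with datatypes. }
  assert (Hdups2 : dups (tvars s ++ lvars Dr) <= dups (lvars Dfull))
    by (rewrite Hlv2; apply dups_app_le).
  assert (psize Dfull = asize E + psize D) by (now rewrite HD).
  assert (psize D = psize Dl + psize K1) by (now rewrite HK1, psize_app).
  assert (psize D = psize Dr + psize K2) by (now rewrite HK2, psize_app).
  apply pow3_sum_lt; rewrite ?psize_cons; simpl; rewrite ?app_nil_r; auto; lia.
Qed.

Lemma linearization_cweight_lt G G' Dfull K P' E q x x' pi pi' :
  Permutation Dfull (E :: K) -> Permutation P' (atom_replace E q (Var x') :: K) ->
  atom_at E q = Some (Var x) -> In x (lvars P') -> ~ In x' (lvars Dfull) ->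
  cweight (Cl G' P', pi') < cweight (Cl G Dfull, pi).
Proof.
  intros HD HP Hq Hx Hx'. unfold cweight; cbn [fst pos].
  destruct (atom_at_avars _ _ _ Hq) as [A [B [HvE HvE']]].
  pose proof (atom_at_asize E q (Var x) (Var x') Hq) as Hsize; simpl tsize in Hsize.
  set (R := A ++ B ++ lvars K).
  assert (HR : Permutation (lvars Dfull) (x :: R))
    by (rewrite HD; simpl; rewrite HvE; unfold R; perm_by_count).
  assert (HR' : Permutation (lvars P') (x' :: R))
    by (rewrite HP; simpl; rewrite HvE'; unfold R; perm_by_count).
  assert (Hx'R : ~ In x' R) by (intros Hin; apply Hx'; rewrite HR; now right).
  assert (HxR : In x R).
  { rewrite HR' in Hx. destruct Hx as [<-|]; auto.
    destruct Hx'. rewrite HR. now left. }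
  assert (Hsz : psize P' = psize Dfull) by (rewrite HP, HD, !psize_cons; lia).
  rewrite HR, HR', dups_cons_fresh, dups_cons_in by auto.
  assert (0 < 3 ^ psize Dfull) by (apply Nat.neq_0_lt_0, Nat.pow_nonzero; lia).
  rewrite Hsz. nia.
Qed.

Definition catoms (d : cclause) : list atom := neg (fst d) ++ pos (fst d).

Lemma in_ccpreds d Pn : In Pn (ccpreds d) <-> exists b, In b (catoms d) /\ apred b = Pn.
Proof. unfold ccpreds, catoms. rewrite <- map_app, in_map_iff. firstorder. Qed.

Definition monadic (N : cset) : Prop := forall P n, pred_occurs N (P, n) -> n = 1.

Lemma mo_step_not_monadic T fP N N' : mo_step T fP N N' -> ~ monadic N.
Proof. intros [P [n [Hn [Ho _]]]] Hm. exact (Hn (Hm P n Ho)). Qed.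

Lemma not_monadic_mo_step T fP N : ~ monadic N -> exists N', mo_step T fP N N'.
Proof.
  intros Hm. destruct (classic (exists P n, n <> 1 /\ pred_occurs N (P, n)))
    as [[P [n [Hn Ho]]]|Hno].
  - exists (fun d => exists c, N c /\ d = proj_cc T P n (fP P n) c).
    exists P, n. repeat split; auto.
  - exfalso. apply Hm. intros P n Ho. destruct (Nat.eq_dec n 1); auto.
    exfalso. eauto.
Qed.

Lemma replace_cl_monadic N c news N' :
  replace_cl N c news N' -> monadic N ->
  (forall d b, In d news -> In b (catoms d) ->
     snd (apred b) = 1 \/ exists a, In a (catoms c) /\ apred a = apred b) ->
  monadic N'.
Proof.
  intros [Hc HN'] Hm Hnews P n [d [Hd Hin]].
  apply HN' in Hd as [[Hd _]|Hd]; [eapply Hm; exists d; eauto|].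
  apply in_ccpreds in Hin as [b [Hb Hpb]].
  destruct (Hnews d b Hd Hb) as [H1|[a [Ha Heq]]]; [now rewrite Hpb in H1|].
  apply (Hm P). exists c. split; auto. apply in_ccpreds. exists a. split; congruence.
Qed.

Lemma sh_step_monadic N N' : sh_step N N' -> monadic N -> monadic N'.
Proof.
  intros [G [Dfull [D [Gl [Gr [Dl [Dr [E [p [s [x [S [pi H]]]]]]]]]]]]].
  destruct H as [HD [_ [_ [_ [_ [_ [HmG [HmD [_ [_ Hrep]]]]]]]]]]. intros Hm.
  destruct (munion_submultiset _ _ _ HmG) as [HGl%submultiset_incl HGr%submultiset_incl].
  destruct (munion_submultiset _ _ _ HmD) as [HDl%submultiset_incl HDr%submultiset_incl].
  assert (HDfull : incl (E :: D) Dfull)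
    by (intros a Ha; now apply (Permutation_in _ (Permutation_sym HD))).
  apply (replace_cl_monadic _ _ _ _ Hrep Hm). unfold catoms; cbn [fst neg pos].
  intros d b [<-|[<-|[]]] Hb; cbn [fst neg pos] in Hb; rewrite in_app_iff in Hb.
  - destruct Hb as [[<-|Hb]|[<-|Hb]]; [now left|right..].
    + exists (asubst (upd x s) b). rewrite apred_asubst, in_app_iff.
      split; auto. left. apply HGl, in_map, Hb.
    + exists E. rewrite apred_atom_replace, in_app_iff.
      split; auto. right. apply HDfull. now left.
    + exists b. rewrite in_app_iff.
      split; auto. right. apply HDfull. right. now apply HDl.
  - destruct Hb as [Hb|[<-|Hb]]; [right|now left|right].
    + exists b. rewrite in_app_iff. auto.
    + exists b. rewrite in_app_iff.
      split; auto. right. apply HDfull. right. now apply HDr.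
Qed.

Lemma linearization_monadic N N' : linearization N N' -> monadic N -> monadic N'.
Proof.
  intros [G [Dfull [K [P' [E [q [x [x' [pi [HD [HP [_ [_ [_ Hrep]]]]]]]]]]]]]] Hm.
  apply (replace_cl_monadic _ _ _ _ Hrep Hm). unfold catoms; cbn [fst neg pos].
  intros d b [<-|[]] Hb. right. cbn [fst neg pos] in Hb. rewrite !in_app_iff in Hb.
  destruct Hb as [[Hb|Hb]|Hb].
  - apply in_map_iff in Hb as [g [<- Hg]].
    exists g. rewrite apred_asubst, in_app_iff. auto.
  - exists b. rewrite in_app_iff. auto.
  - apply (Permutation_in _ HP) in Hb as [<-|Hb].
    + exists E. rewrite apred_atom_replace, in_app_iff. split; auto.
      right. apply (Permutation_in _ (Permutation_sym HD)). now left.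
    + exists b. rewrite in_app_iff. split; auto.
      right. apply (Permutation_in _ (Permutation_sym HD)). now right.
Qed.

Lemma finite_cset_incl (N : cset) m :
  (forall d, N d -> In d m) -> exists l, NoDup l /\ forall d, N d <-> In d l.
Proof.
  revert N; induction m as [|a m IH]; intros N HN.
  - exists []. split; [constructor|]. intros d. split; [apply HN|intros []].
  - destruct (IH (fun d => N d /\ d <> a)) as [l [Hl Hr]].
    { intros d [Hd Hne]. destruct (HN d Hd) as [->|]; tauto. }
    destruct (classic (N a)) as [Ha|Ha].
    + exists (a :: l). split.
      * constructor; auto. intros Hin. now apply Hr in Hin as [_ []].
      * intros d. simpl. rewrite <- Hr.
        destruct (classic (d = a)) as [->|]; intuition congruence.
    + exists l. split; auto. intros d. rewrite <- Hr.
      destruct (classic (d = a)) as [->|]; tauto.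
Qed.

Lemma replace_cl_finite N c news N' :
  replace_cl N c news N' -> finite_cset N -> finite_cset N'.
Proof.
  intros [_ HN'] [l Hl]. destruct (finite_cset_incl N' (l ++ news)) as [l' [_ Hl']].
  - intros d Hd. apply HN' in Hd as [[Hd _]|Hd]; apply in_or_app; [left|right]; auto.
    now apply Hl.
  - now exists l'.
Qed.

Lemma ap_step_finite T fP k N N' :
  ap_step T fP k N N' -> finite_cset N -> finite_cset N'.
Proof.
  destruct k; simpl.
  - intros [C [pi [x [t [_ [_ [_ Hrep]]]]]]]. exact (replace_cl_finite _ _ _ _ Hrep).
  - intros [P [n [_ [_ HN']]]] [l Hl].
    destruct (finite_cset_incl N' (map (proj_cc T P n (fP P n)) l)) as [l' [_ Hl']].
    + intros d Hd. apply HN' in Hd as [c [Hc ->]]. now apply in_map, Hl.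
    + now exists l'.
  - intros [[G [Dfull [D [Gl [Gr [Dl [Dr [E [p [s [x [S [pi H]]]]]]]]]]]]] _].
    destruct H as [_ [_ [_ [_ [_ [_ [_ [_ [_ [_ Hrep]]]]]]]]]].
    exact (replace_cl_finite _ _ _ _ Hrep).
  - intros [H _]. apply li_step_linearization in H
      as [G [Dfull [K [P' [E [q [x [x' [pi [_ [_ [_ [_ [_ Hrep]]]]]]]]]]]]]].
    exact (replace_cl_finite _ _ _ _ Hrep).
Qed.

Definition weight (l : list cclause) : nat := list_sum (map cweight l).

Lemma list_sum_map_incl {A} (f : A -> nat) l m :
  NoDup l -> incl l m -> list_sum (map f l) <= list_sum (map f m).
Proof.
  revert m; induction l as [|a l IH]; intros m Hnd Hi; simpl; [lia|].
  inversion Hnd as [|? ? Hal Hl]; subst.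
  destruct (in_split a m (Hi a (or_introl eq_refl))) as [m1 [m2 ->]].
  assert (list_sum (map f l) <= list_sum (map f (m1 ++ m2))).
  { apply IH; auto. intros y Hy. specialize (Hi y (or_intror Hy)).
    rewrite in_app_iff in *. destruct Hi as [|[<-|]]; tauto. }
  rewrite !map_app, !list_sum_app in *. simpl. lia.
Qed.

Lemma replace_cl_weight_lt N c news N' l :
  replace_cl N c news N' -> (forall d, N d <-> In d l) -> weight news < cweight c ->
  exists l', (forall d, N' d <-> In d l') /\ weight l' < weight l.
Proof.
  intros [Hc HN'] Hl Hlt.
  destruct (in_split c l (proj1 (Hl c) Hc)) as [l1 [l2 ->]].
  assert (Hsub : forall d, N' d -> In d (l1 ++ l2 ++ news)).
  { intros d Hd. apply HN' in Hd as [[Hd Hne]|Hd]; rewrite !in_app_iff; auto.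
    apply Hl in Hd. rewrite in_app_iff in Hd. simpl in Hd. intuition congruence. }
  destruct (finite_cset_incl N' _ Hsub) as [l' [Hnd Hr]].
  exists l'. split; auto.
  assert (weight l' <= weight (l1 ++ l2 ++ news)).
  { apply list_sum_map_incl; auto. intros d Hd. now apply Hsub, Hr. }
  unfold weight in *. rewrite !map_app, !list_sum_app in *. simpl. lia.
Qed.

Lemma sh_step_weight_lt N N' l :
  sh_step N N' -> (forall d, N d <-> In d l) ->
  exists l', (forall d, N' d <-> In d l') /\ weight l' < weight l.
Proof.
  intros [G [Dfull [D [Gl [Gr [Dl [Dr [E [p [s [x [S [pi H]]]]]]]]]]]]] Hl.
  destruct H as [HD [Hp [Hlp [Hs [Hx [_ [_ [HmD [_ [_ Hrep]]]]]]]]]].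
  destruct (munion_submultiset _ _ _ HmD) as [HDl HDr].
  apply (replace_cl_weight_lt _ _ _ _ _ Hrep Hl). unfold weight; simpl.
  rewrite Nat.add_0_r. apply (sh_cweight_lt G Dfull D); auto.
  intros Hin. apply Hx, in_or_app. left. now apply in_or_app; right.
Qed.

Lemma linearization_weight_lt N N' l :
  linearization N N' -> (forall d, N d <-> In d l) ->
  exists l', (forall d, N' d <-> In d l') /\ weight l' < weight l.
Proof.
  intros [G [Dfull [K [P' [E [q [x [x' [pi [HD [HP [Hq [Hx [Hx' Hrep]]]]]]]]]]]]]] Hl.
  apply (replace_cl_weight_lt _ _ _ _ _ Hrep Hl). unfold weight; simpl.
  rewrite Nat.add_0_r. eapply linearization_cweight_lt; eauto.
  intros Hin. apply Hx', in_or_app. left. now apply in_or_app; right.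
Qed.

Definition symbol_eq_dec (a b : nat * nat) : {a = b} + {a <> b}.
Proof. decide equality; apply Nat.eq_dec. Defined.

Definition nonmonadic_preds_in (L : list (nat * nat)) (N : cset) : Prop :=
  forall P n, n <> 1 -> pred_occurs N (P, n) -> In (P, n) L.

Lemma finite_nonmonadic_preds_in N : finite_cset N -> exists L, nonmonadic_preds_in L N.
Proof.
  intros [l Hl]. exists (flat_map ccpreds l). intros P n _ [d [Hd Hin]].
  apply in_flat_map. exists d. split; auto. now apply Hl.
Qed.

Lemma mo_step_nonmonadic_preds_in T fP N N' L :
  mo_step T fP N N' -> nonmonadic_preds_in L N ->
  exists L', length L' < length L /\ nonmonadic_preds_in L' N'.
Proof.
  intros [P [n [Hn [Ho HN']]]] HL. exists (remove symbol_eq_dec (P, n) L). split.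
  - apply remove_length_lt, HL; auto.
  - intros Q m Hm [d [Hd Hin]]. apply HN' in Hd as [c [Hc ->]].
    apply in_ccpreds in Hin as [b [Hb Hpb]].
    unfold catoms, proj_cc in Hb; cbn [fst neg pos] in Hb.
    rewrite <- map_app, in_map_iff in Hb. destruct Hb as [[R ts] [<- Ha]].
    cbn [proj_atom] in Hpb.
    destruct (andb (Nat.eqb R P) (Nat.eqb (length ts) n)) eqn:Em.
    + now injection Hpb as _ <-.
    + apply in_in_remove.
      * intros He. injection Hpb as <- <-. injection He as -> Hlen.
        now rewrite Hlen, !Nat.eqb_refl in Em.
      * apply HL; auto. exists c. split; auto. apply in_ccpreds. now exists (Atom R ts).
Qed.

Lemma ap_step_not_monadic T fP k N N' :
  ap_step T fP k N N' -> k <> KRef -> ~ monadic N -> mo_step T fP N N'.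
Proof.
  intros Hst Hk Hm. destruct (not_monadic_mo_step T fP N Hm) as [M HM].
  destruct k; simpl in Hst; [congruence|exact Hst| |]; exfalso.
  - apply (proj2 Hst). eauto.
  - apply (proj1 (proj2 Hst)). eauto.
Qed.

Lemma ap_step_monadic_weight_lt T fP k N N' l :
  ap_step T fP k N N' -> k <> KRef -> monadic N -> (forall d, N d <-> In d l) ->
  monadic N' /\ exists l', (forall d, N' d <-> In d l') /\ weight l' < weight l.
Proof.
  intros Hst Hk Hm Hl. destruct k; simpl in Hst.
  - congruence.
  - now apply mo_step_not_monadic in Hst.
  - destruct Hst as [Hst _].
    split; [exact (sh_step_monadic _ _ Hst Hm)|exact (sh_step_weight_lt _ _ _ Hst Hl)].
  - destruct Hst as [Hst%li_step_linearization _].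
    split; [exact (linearization_monadic _ _ Hst Hm)
           |exact (linearization_weight_lt _ _ _ Hst Hl)].
Qed.

Lemma no_infinite_descent (P : nat -> nat -> Prop) :
  (forall i m, P i m -> exists m', m' < m /\ P (S i) m') -> forall i m, ~ P i m.
Proof.
  intros Hstep i m. revert i. induction m as [m IH] using lt_wf_ind. intros i Hi.
  destruct (Hstep i m Hi) as [m' [Hlt Hm']]. exact (IH m' Hlt (S i) Hm').
Qed.

Section Derivation.

Variables (T : nat) (fP : nat -> nat -> nat) (sq : nat -> cset) (ks : nat -> rule_kind).
Variable n0 : nat.
Hypothesis finite_sq0 : finite_cset (sq 0).
Hypothesis sq_step : forall i, ap_step T fP (ks i) (sq i) (sq (S i)).
Hypothesis no_ref_after : forall i, n0 <= i -> ks i <> KRef.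

Lemma derivation_finite i : finite_cset (sq i).
Proof.
  induction i as [|i IH]; auto. exact (ap_step_finite _ _ _ _ _ (sq_step i) IH).
Qed.

Lemma derivation_eventually_monadic : exists j, n0 <= j /\ monadic (sq j).
Proof.
  apply NNPP. intros Hno.
  destruct (finite_nonmonadic_preds_in _ (derivation_finite n0)) as [L HL].
  refine (no_infinite_descent (fun i m => n0 <= i /\
            exists L, length L = m /\ nonmonadic_preds_in L (sq i)) _ n0 (length L) _);
    [|eauto].
  intros i m [Hi [L' [<- HL']]].
  assert (Hmo : mo_step T fP (sq i) (sq (S i)))
    by (apply (ap_step_not_monadic _ _ (ks i)); eauto).
  destruct (mo_step_nonmonadic_preds_in _ _ _ _ _ Hmo HL') as [L'' [Hlt HL'']].
  exists (length L''). split; auto. split; eauto.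
Qed.

Lemma derivation_not_monadic j : n0 <= j -> ~ monadic (sq j).
Proof.
  intros Hj Hmj. destruct (derivation_finite j) as [l Hl].
  refine (no_infinite_descent (fun i m => j <= i /\ monadic (sq i) /\
            exists l, (forall c, sq i c <-> In c l) /\ weight l = m) _ j (weight l) _);
    [|eauto].
  intros i m [Hi [Hmi [l' [Hl' <-]]]].
  destruct (ap_step_monadic_weight_lt _ _ (ks i) _ _ l' (sq_step i))
    as [Hm' [l'' [Hl'' Hlt]]]; auto; [apply no_ref_after; lia|].
  exists (weight l''). split; auto. split; [lia|eauto].
Qed.

End Derivation.

Lemma ap_derivation_terminates N T fP :
  finite_cset N ->
  ~ exists (seq : nat -> cset) (ks : nat -> rule_kind),
      (forall c, seq 0 c <-> N c) /\
      (forall i, ap_step T fP (ks i) (seq i) (seq (S i))) /\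
      (exists n0, forall i, n0 <= i -> ks i <> KRef).
Proof.
  intros [l Hl] [sq [ks [H0 [Hst [n0 Hn0]]]]].
  assert (Hfin : finite_cset (sq 0)) by (exists l; intros c; now rewrite H0).
  destruct (derivation_eventually_monadic T fP sq ks n0 Hfin Hst Hn0) as [j [Hj Hmj]].
  exact (derivation_not_monadic T fP sq ks n0 Hfin Hst Hn0 j Hj Hmj).
Qed.

Theorem lemma6 (N : cset) (T : nat) (fP : nat -> nat -> nat) :
  finite_cset N ->
  (forall c, N c -> wf_constr (snd c)) ->
  fresh_params N T fP ->
  (* (i) no infinite =>_AP derivation from N with finitely many Ref steps *)
  (~ exists (seq : nat -> cset) (ks : nat -> rule_kind),
        (forall c, seq 0 c <-> N c) /\
        (forall i, ap_step T fP (ks i) (seq i) (seq (S i))) /\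
        (exists n0, forall i, n0 <= i -> ks i <> KRef)) /\
  (* (ii) over-approximation: satisfiability of N' implies that of N *)
  (forall (k : rule_kind) (N' : cset),
      ap_step T fP k N N' -> satisfiable N' -> satisfiable N).
Proof.
  intros HN _ _. split.
  - exact (ap_derivation_terminates N T fP HN).
  - intros k N'. apply ap_step_sound.
Qed.
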